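(* The set $\{S_1 : S\in\mathrm{OW}_n(\mathbb{C})\}$ of first slices of symmetric tensors in $\mathrm{OW}_n(\mathbb{C})$ is dense (in the Euclidean topology) in the space of complex symmetric $n\times n$ matrices.
   Context: For a symmetric tensor $S\in\mathbb{C}^{n\times n\times n}$ the first slice is $S_1=(S_{ij1})_{1\le i,j\le n}$. Tensors are identified with cubic forms $f=\sum_{i,j,k}S_{ijk}x_ix_jx_k$. $\mathrm{OW}_n(\mathbb{C})$ is the set of $f\in\mathbb{C}[x_1,\dots,x_n]_3$ that can be written $f(x)=g(Ax)$ with $A\in M_n(\mathbb{C})$, $A^TA=\mathrm{Id}$, and $g=\alpha_1x_1^3+\cdots+\alpha_nx_n^3$. *)

From HB Require Import structures.
From mathcomp Require Import all_boot all_order all_algebra.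
Set Implicit Arguments. Unset Strict Implicit. Unset Printing Implicit Defensive.
Import Order.TTheory GRing.Theory Num.Theory.
Local Open Scope ring_scope.

Definition tensor3 (C : Type) (n : nat) := 'I_n -> 'I_n -> 'I_n -> C.

(* Full symmetry under permutations of the three indices
   (generated by the two adjacent transpositions). *)
Definition sym_tensor (C : Type) (n : nat) (S : tensor3 C n) : Prop :=
  forall i j k, S i j k = S j i k /\ S i j k = S i k j.

Definition cubic_form (C : ringType) (n : nat) (S : tensor3 C n) (x : 'cV[C]_n) : C :=
  \sum_(i < n) \sum_(j < n) \sum_(k < n) S i j k * x i 0 * x j 0 * x k 0.

(* OW_n(C): symmetric tensors whose cubic form is f(x) = g(A x) with
   A^T A = Id and g = alpha_1 x_1^3 + ... + alpha_n x_n^3 (identity of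
   polynomials, stated as identity of functions on C^n; C is infinite). *)
Definition in_OW (C : comRingType) (n : nat) (S : tensor3 C n) : Prop :=
  sym_tensor S /\
  exists A : 'M[C]_n, A^T *m A = 1%:M /\
    exists alpha : 'I_n -> C,
      forall x : 'cV[C]_n,
        cubic_form S x = \sum_(k < n) alpha k * ((A *m x) k 0) ^+ 3.

(* First slice S_1 = (S_{i j 1})_{i,j}; index 1 is ord0 (dimension n.+1). *)
Definition first_slice (C : Type) (n : nat) (S : tensor3 C n.+1) : 'M[C]_n.+1 :=
  \matrix_(i, j) S i j ord0.

(* For a square matrix B consider the genericity test
       genericity B = det (K(B)) * Res(chi_B, chi_B'),
   where K(B) is the Krylov matrix of e_1 under B and chi_B its
   characteristic polynomial.  Two facts make it useful:
   - if a symmetric B passes the test (genericity B <> 0), then B has n+1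
     distinct eigenvalues and eigenvectors which, after normalization, give
     B = A^T diag(d) A with A^T A = 1 and A_l1 <> 0 for every l; the tensor
     sum_l (d_l / A_l1) a_l (x) a_l (x) a_l then lies in OW_n with first slice B;
   - genericity is a polynomial in the entries of B, and it does not vanish at
     H^T diag(0, 1, ..., n) H for a Householder reflection H.
   Given a symmetric M, the test restricted to the segment from M to that
   matrix is a nonzero polynomial in one variable, hence has a non-root c
   arbitrarily close to 0; M + c (N - M) then passes the test and is close to
   M entrywise. *)

From HB Require Import structures.
From mathcomp Require Import all_boot all_order all_algebra all_field.
From mathcomp Require Import ring zify.
Set Implicit Arguments. Unset Strict Implicit. Unset Printing Implicit Defensive.
Import Order.TTheory GRing.Theory Num.Theory.
Local Open Scope ring_scope.

Section Genericity.
Variables (R : comNzRingType) (n : nat).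

Definition krylov (B : 'M[R]_n.+1) : 'M[R]_n.+1 := \matrix_(i, k) (B ^+ k) i ord0.

(* Nonzero iff e_1 is a cyclic vector of B and chi_B has simple roots. *)
Definition genericity (B : 'M[R]_n.+1) : R :=
  \det (krylov B) * resultant (char_poly B) (char_poly B)^`().

Lemma eigvec_exp (B : 'M[R]_n.+1) (v : 'rV[R]_n.+1) a k :
  v *m B = a *: v -> v *m B ^+ k = a ^+ k *: v.
Proof.
move=> vB; elim: k => [|k IH]; first by rewrite expr0 mulmx1 scale1r.
by rewrite exprSr mulmxA IH -scalemxAl vB scalerA exprSr.
Qed.

Lemma eigen_rows_krylov (B V : 'M[R]_n.+1) (d : 'I_n.+1 -> R) :
  V *m B = diag_mx (\row_l d l) *m V ->
  V *m krylov B = diag_mx (\row_l V l ord0) *m \matrix_(l, k) d l ^+ k.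
Proof.
move=> VB; apply/matrixP => l k; rewrite mul_diag_mx !mxE mulrC.
have rowB : row l V *m B = d l *: row l V.
  apply/rowP => j; have := congr1 (fun X : 'M_n.+1 => X l j) VB.
  rewrite mul_diag_mx !mxE => <-.
  by apply: eq_bigr => i _; rewrite mxE.
have := congr1 (fun v : 'rV_n.+1 => v 0 ord0) (eigvec_exp k rowB).
by rewrite !mxE => <-; apply: eq_bigr => i _; rewrite !mxE.
Qed.

End Genericity.

Lemma map_mx_exp (R S : comNzRingType) (f : {rmorphism R -> S}) n
    (B : 'M[R]_n.+1) k :
  map_mx f (B ^+ k) = map_mx f B ^+ k.
Proof.
elim: k => [|k IH]; first by rewrite !expr0 map_mx1.
by rewrite !exprSr -!mulmxE map_mxM IH.
Qed.

(* The genericity test commutes with ring morphisms out of a polynomial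
   ring (the form in which the library states that resultants commute with
   morphisms), as long as the leading coefficient n+1 of the derivative of
   the characteristic polynomial survives. *)
Lemma genericity_map (R S : comNzRingType) (f : {rmorphism {poly R} -> S}) n
    (B : 'M[{poly R}]_n.+1) :
  n.+1%:R != 0 :> S -> f (genericity B) = genericity (map_mx f B).
Proof.
move=> nS; rewrite /genericity rmorphM /= -det_map_mx.
have -> : map_mx f (krylov B) = krylov (map_mx f B).
  by apply/matrixP => i k; rewrite !mxE -map_mx_exp mxE.
congr (_ * _); set p := char_poly B.
have nR : n.+1%:R != 0 :> {poly R}.
  by apply: contra nS => /eqP n0; rewrite -(rmorph_nat f) n0 rmorph0.
have szp : size p = n.+2 by rewrite size_char_poly.
have lp : lead_coef p = 1 by apply/monicP/char_poly_monic.
have dn : p^`()`_n = n.+1%:R by rewrite coef_deriv -lp lead_coefE szp.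
have szd : size p^`() = n.+1.
  apply/eqP; rewrite eqn_leq -ltnS -szp lt_size_deriv -?size_poly_eq0 ?szp //=.
  rewrite ltnNge; apply/negP => /leq_sizeP /(_ n (leqnn n)) /eqP.
  by rewrite dn (negbTE nR).
have ld : lead_coef p^`() = n.+1%:R by rewrite lead_coefE szd.
rewrite map_resultant ?lp ?ld ?rmorph1 ?oner_neq0 ?rmorph_nat //.
by rewrite -deriv_map map_char_poly.
Qed.

Lemma genericity_line (R : comNzRingType) n (M X : 'M[R]_n.+1) :
  n.+1%:R != 0 :> R ->
  exists Q : {poly R}, forall t, Q.[t] = genericity (M + t *: X).
Proof.
move=> nR; exists (genericity (map_mx polyC M + 'X *: map_mx polyC X)) => t.
rewrite -horner_evalE genericity_map //.
congr genericity; apply/matrixP => i j.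
by rewrite !mxE rmorphD rmorphM /= !horner_evalE hornerX !hornerC.
Qed.

Lemma det_powers_neq0 (F : idomainType) n (d : 'I_n -> F) :
  injective d -> \det (\matrix_(l, k) d l ^+ k) != 0.
Proof.
move=> dinj; have -> : \matrix_(l, k) d l ^+ k = (Vandermonde n (\row_l d l))^T.
  by apply/matrixP => l k; rewrite !mxE.
rewrite det_tr det_Vandermonde; apply/prodf_neq0 => i _.
apply/prodf_neq0 => j ij; rewrite !mxE subr_eq0; apply/eqP => dji.
by move: ij; rewrite (dinj _ _ dji) ltnn.
Qed.

Lemma resultant_deriv_separable (F : fieldType) (p : {poly F}) :
  p != 0 -> (resultant p p^`() != 0) = separable_poly p.
Proof.
move=> p0; rewrite resultant_eq0 -leqNgt unlock coprimep_def eqn_leq.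
by rewrite lt0n size_poly_eq0 gcdp_eq0 negb_and p0 andbT.
Qed.

Lemma sym_eigen_rows_orth (F : fieldType) n (B V : 'M[F]_n) (d : 'I_n -> F) :
  B^T = B -> injective d -> V *m B = diag_mx (\row_l d l) *m V ->
  forall l m, l != m -> (V *m V^T) l m = 0.
Proof.
move=> BT dinj VB l m lm.
have : V *m B *m V^T = V *m V^T *m diag_mx (\row_l d l).
  by rewrite -mulmxA -{1}BT -trmx_mul VB trmx_mul tr_diag_mx mulmxA.
rewrite VB -mulmxA => /(congr1 (fun X : 'M_n => X l m)).
rewrite mul_diag_mx mul_mx_diag !mxE => /eqP; rewrite mulrC -subr_eq0 -mulrBr.
rewrite mulf_eq0 subr_eq0 => /orP[/eqP Vlm0|/eqP dml]; first by [].
by move: lm; rewrite (dinj _ _ dml) eqxx.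
Qed.

Lemma eigen_rows_unit (F : fieldType) n (B V : 'M[F]_n.+1) (d : 'I_n.+1 -> F) :
  injective d -> \det (krylov B) != 0 -> V *m B = diag_mx (\row_l d l) *m V ->
  (forall l, row l V != 0) -> (forall l, V l ord0 != 0) /\ \det V != 0.
Proof.
move=> dinj K0 VB V0; have VK := eigen_rows_krylov VB.
have first_nz : forall l, V l ord0 != 0.
  move=> l; apply: contra (V0 l) => /eqP Vl0.
  have : row l V *m krylov B = 0.
    by apply/rowP => k; rewrite -row_mul VK mul_diag_mx !mxE Vl0 mul0r.
  have Kunit : krylov B \in unitmx by rewrite unitmxE unitfE.
  by move=> VlK; rewrite -(mulmxK Kunit (row l V)) VlK mul0mx.
split=> //; have := congr1 determinant VK; rewrite !det_mulmx det_diag => detVK.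
have : \det V * \det (krylov B) != 0.
  rewrite detVK mulf_neq0 ?det_powers_neq0 //.
  by apply/prodf_neq0 => l _; rewrite mxE.
by rewrite mulf_eq0 negb_or => /andP[].
Qed.

Lemma normalize_orthogonal_rows (C : numClosedFieldType) n (V : 'M[C]_n) :
  \det V != 0 -> (forall l m, l != m -> (V *m V^T) l m = 0) ->
  exists c : 'I_n -> C, (forall l, c l != 0) /\
    diag_mx (\row_l c l) *m V *m (diag_mx (\row_l c l) *m V)^T = 1%:M.
Proof.
move=> V0 orth; set G := V *m V^T.
have Gdiag : G = diag_mx (\row_l G l l).
  apply/matrixP => l m; rewrite [RHS]mxE.
  have [<-|lm] := eqVneq l m; rewrite ?mulr1n ?mulr0n; last exact: orth.
  by rewrite [RHS]mxE.
have Gll : forall l, G l l != 0.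
  move=> l; have : \det G != 0 by rewrite det_mulmx det_tr mulf_neq0.
  by rewrite {1}Gdiag det_diag => /prodf_neq0 /(_ l isT); rewrite mxE.
have sqrt0 : forall l, sqrtC (G l l) != 0 by move=> l; rewrite sqrtC_eq0.
exists (fun l => (sqrtC (G l l))^-1); split=> [l|]; first by rewrite invr_eq0.
rewrite trmx_mul tr_diag_mx mulmxA -[_ *m V *m V^T]mulmxA -/G.
clearbody G; rewrite {2}Gdiag !mulmx_diag -diag_const_mx.
congr diag_mx; apply/rowP => l; rewrite !mxE.
by rewrite -{2}(sqrtCK (G l l)) expr2 mulrA mulVf // mul1r mulfV.
Qed.

Lemma distinct_eigenbasis (C : closedFieldType) n (B : 'M[C]_n.+1) :
  resultant (char_poly B) (char_poly B)^`() != 0 ->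
  exists (d : 'I_n.+1 -> C) (V : 'M[C]_n.+1),
    [/\ injective d, forall l, row l V != 0 & V *m B = diag_mx (\row_l d l) *m V].
Proof.
set p := char_poly B => res0.
have p0 : p != 0 by rewrite -size_poly_eq0 size_char_poly.
have [r Dp] := closed_field_poly_normal p.
rewrite (monicP (char_poly_monic B)) scale1r in Dp.
have szr : size r = n.+1.
  by apply/eqP; rewrite -eqSS -(size_prod_XsubC r id) -Dp size_char_poly.
have ur : uniq r.
  by rewrite -separable_prod_XsubC -Dp -resultant_deriv_separable.
pose d (l : 'I_n.+1) := r`_l.
have dinj : injective d.
  by move=> l m /eqP; rewrite /d nth_uniq ?szr // => /eqP/val_inj.
have eigvec l : exists2 v : 'rV[C]_n.+1, v *m B = d l *: v & v != 0.
  apply/eigenvalueP; rewrite eigenvalue_root_char -/p Dp.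
  by rewrite root_prod_XsubC mem_nth ?szr.
have [v vB v0] := fin_all_exists2 eigvec.
exists d, (\matrix_l v l); split=> [//|l|]; first by rewrite rowK.
apply/row_matrixP => l; rewrite row_mul rowK vB.
by apply/rowP => j; rewrite mul_diag_mx !mxE.
Qed.

Lemma generic_sym_orth_diag (C : numClosedFieldType) n (B : 'M[C]_n.+1) :
  B^T = B -> genericity B != 0 ->
  exists (A : 'M[C]_n.+1) (d : 'I_n.+1 -> C),
    [/\ A^T *m A = 1%:M, forall l, A l ord0 != 0 &
        B = A^T *m diag_mx (\row_l d l) *m A].
Proof.
move=> BT; rewrite /genericity mulf_eq0 negb_or => /andP[K0 res0].
have [d [V [dinj V0 VB]]] := distinct_eigenbasis res0.
have [first0 detV] := eigen_rows_unit dinj K0 VB V0.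
have [c [c0 AAT]] := normalize_orthogonal_rows detV (sym_eigen_rows_orth BT dinj VB).
set A := diag_mx (\row_l c l) *m V in AAT.
have AB : A *m B = diag_mx (\row_l d l) *m A.
  rewrite /A -mulmxA VB !mulmxA !mulmx_diag.
  by congr (diag_mx _ *m V); apply/rowP => l; rewrite !mxE mulrC.
exists A, d; split; first exact: mulmx1C.
  by move=> l; rewrite /A mul_diag_mx !mxE mulf_neq0.
by rewrite -mulmxA -AB mulmxA (mulmx1C AAT) mul1mx.
Qed.

Lemma diag_mx_exp (R : comNzRingType) n (d : 'I_n.+1 -> R) k :
  diag_mx (\row_l d l) ^+ k = diag_mx (\row_l d l ^+ k).
Proof.
elim: k => [|k IH].
  by rewrite expr0 -idmxE -diag_const_mx; congr diag_mx; apply/rowP => l; rewrite !mxE.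
rewrite exprSr IH -mulmxE mulmx_diag; congr diag_mx.
by apply/rowP => l; rewrite !mxE exprSr.
Qed.

Lemma orth_conj_exp (R : comNzRingType) n (A D : 'M[R]_n.+1) k :
  A^T *m A = 1%:M -> (A^T *m D *m A) ^+ k = A^T *m D ^+ k *m A.
Proof.
move=> ATA; have AAT := mulmx1C ATA; elim: k => [|k IH].
  by rewrite !expr0 mulmx1.
by rewrite !exprSr IH -!mulmxE !mulmxA -[A^T *m _ *m A *m A^T]mulmxA AAT mulmx1.
Qed.

Lemma char_poly_orth_conj (R : comNzRingType) n (A D : 'M[R]_n) :
  A^T *m A = 1%:M -> char_poly (A^T *m D *m A) = char_poly D.
Proof.
move=> ATA; pose mA := map_mx (@polyC R) A.
have mATA : mA^T *m mA = 1%:M by rewrite /mA map_trmx -map_mxM ATA map_mx1.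
rewrite /char_poly.
have -> : char_poly_mx (A^T *m D *m A) = mA^T *m char_poly_mx D *m mA.
  rewrite /char_poly_mx mulmxBr mulmxBl mul_mx_scalar -scalemxAl mATA scalemx1.
  by rewrite /mA map_trmx -!map_mxM.
by rewrite !det_mulmx mulrAC -det_mulmx mATA det1 mul1r.
Qed.

Lemma genericity_orth_diag (F : fieldType) n (A : 'M[F]_n.+1) (d : 'I_n.+1 -> F) :
  A^T *m A = 1%:M -> (forall l, A l ord0 != 0) -> injective d ->
  genericity (A^T *m diag_mx (\row_l d l) *m A) != 0.
Proof.
move=> ATA A0 dinj; set N := A^T *m _ *m A.
have KN : krylov N = A^T *m diag_mx (\row_l A l ord0) *m \matrix_(l, k) d l ^+ k.
  apply/matrixP => i k; rewrite !mxE orth_conj_exp // diag_mx_exp !mxE.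
  by apply: eq_bigr => l _; rewrite !mul_mx_diag !mxE mulrAC.
have detAT : \det A^T != 0.
  apply/eqP => AT0; have := congr1 determinant ATA.
  by rewrite det_mulmx AT0 mul0r det1 => /eqP; rewrite eq_sym oner_eq0.
have K0 : \det (krylov N) != 0.
  rewrite KN !det_mulmx det_diag !mulf_neq0 ?det_powers_neq0 //.
  by apply/prodf_neq0 => l _; rewrite mxE.
have cpN : char_poly N = \prod_(z <- [seq d l | l <- enum 'I_n.+1]) ('X - z%:P).
  rewrite char_poly_orth_conj // char_poly_trig ?diag_mx_is_trig //.
  by rewrite big_map big_enum; apply: eq_bigr => l _; rewrite !mxE eqxx mulr1n.
rewrite /genericity mulf_neq0 //.
rewrite resultant_deriv_separable -?size_poly_eq0 ?size_char_poly //.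
by rewrite cpN separable_prod_XsubC map_inj_uniq ?enum_uniq.
Qed.

Lemma cube_sum (R : comNzRingType) n (f : 'I_n -> R) :
  (\sum_i f i) ^+ 3 = \sum_i \sum_j \sum_k f i * f j * f k.
Proof.
rewrite exprS expr2 mulrA mulr_suml mulr_suml; apply: eq_bigr => i _.
rewrite -mulrA mulr_suml mulr_sumr; apply: eq_bigr => j _.
by rewrite mulrA mulr_sumr.
Qed.

(* The tensor sum_l alpha_l a_l (x) a_l (x) a_l, built from the rows a_l of
   an orthogonal matrix, lies in OW_n; choosing alpha_l = d_l / A_l1 makes
   its first slice equal to A^T diag(d) A. *)
Lemma orth_diag_first_slice (F : fieldType) n (A : 'M[F]_n.+1) (d : 'I_n.+1 -> F) :
  A^T *m A = 1%:M -> (forall l, A l ord0 != 0) ->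
  exists S : tensor3 F n.+1, in_OW S /\
    forall i j, first_slice S i j = (A^T *m diag_mx (\row_l d l) *m A) i j.
Proof.
move=> ATA A0; pose alpha l := d l / A l ord0.
pose S : tensor3 F n.+1 := fun i j k => \sum_l alpha l * A l i * A l j * A l k.
exists S; split; last first.
  move=> i j; rewrite /first_slice !mxE; apply: eq_bigr => l _.
  by rewrite mul_mx_diag !mxE /alpha; field; exact: A0.
split.
  by move=> i j k; split; apply: eq_bigr => l _; ring.
exists A; split => //; exists alpha => x; rewrite /cubic_form.
transitivity (\sum_l \sum_i \sum_j \sum_k
   alpha l * ((A l i * x i 0) * (A l j * x j 0) * (A l k * x k 0))).
  symmetry; rewrite exchange_big; apply: eq_bigr => i _; rewrite exchange_big.
  apply: eq_bigr => j _; rewrite exchange_big; apply: eq_bigr => k _.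
  by rewrite /S !mulr_suml; apply: eq_bigr => l _; ring.
apply: eq_bigr => l _; rewrite !mxE cube_sum mulr_sumr; apply: eq_bigr => i _.
by rewrite mulr_sumr; apply: eq_bigr => j _; rewrite mulr_sumr.
Qed.

(* The Householder reflection H = I - (2 / u^T u) u u^T, u = (n+1, 1, ..., 1),
   is an orthogonal matrix whose first column has no zero entry. *)
Lemma householder_full_first_column (F : numFieldType) n :
  exists H : 'M[F]_n.+1, H^T *m H = 1%:M /\ forall l, H l ord0 != 0.
Proof.
pose u : 'cV[F]_n.+1 := \col_i (if i == ord0 then n.+1%:R else 1).
pose s : F := (n.+1 ^ 2 + n)%:R.
have s0 : s != 0 by rewrite pnatr_eq0; lia.
have uTu : u^T *m u = s%:M.
  apply/matrixP => i j; rewrite !ord1 !mxE big_ord_recl /= !mxE eqxx mulr1n.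
  under eq_bigr => l _ do rewrite !mxE /= mulr1.
  by rewrite sumr_const card_ord /s natrD natrX expr2.
pose H : 'M[F]_n.+1 := 1%:M - (2 / s) *: (u *m u^T).
have HT : H^T = H by rewrite /H linearB /= tr_scalar_mx linearZ /= trmx_mul trmxK.
have PP : u *m u^T *m (u *m u^T) = s *: (u *m u^T).
  by rewrite mulmxA -[u *m u^T *m u]mulmxA uTu mul_mx_scalar -scalemxAl.
exists H; split.
  rewrite HT /H mulmxBl !mulmxBr mul1mx mulmx1 -scalemxAl -!scalemxAr mul1mx PP.
  rewrite !scalerA (_ : 2 / s * (2 / s) * s = 2 / s + 2 / s).
    rewrite scalerDl; set Q := _ *: (u *m u^T).
    have -> : Q - (Q + Q) = - Q by rewrite opprD addrA subrr sub0r.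
    by rewrite opprK subrK.
  by rewrite -mulrA divfK // mulr2n mulrDr mulr1 mulrC.
move=> l; rewrite /H !mxE big_ord1 !mxE eqxx.
have [_|_] := eqVneq l ord0; last first.
  by rewrite mulr0n sub0r oppr_eq0 mul1r !mulf_neq0 ?invr_eq0 ?pnatr_eq0.
rewrite mulr1n subr_eq0; apply/eqP => /(congr1 ( *%R^~ s)).
by rewrite mul1r mulrAC divfK // /s -!natrM => /eqP; rewrite eqr_nat; lia.
Qed.

(* A nonzero polynomial has a non-root in every interval (0, del]: among the
   size Q distinct points del/1, ..., del/(size Q) at most size Q - 1 are
   roots. *)
Lemma nonroot_near0 (R : numFieldType) (Q : {poly R}) (del : R) :
  Q != 0 -> 0 < del -> exists2 c, 0 < c <= del & ~~ root Q c.
Proof.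
move=> Q0 del0; pose pts := [seq del / k.+1%:R | k <- iota 0 (size Q)].
have uniq_pts : uniq pts.
  rewrite map_inj_uniq ?iota_uniq // => a b.
  by move/(mulfI (lt0r_neq0 del0))/invr_inj/eqP; rewrite eqr_nat eqSS => /eqP.
have : ~~ all (root Q) pts.
  apply/negP => all_roots; have := max_poly_roots Q0 all_roots uniq_pts.
  by rewrite size_map size_iota ltnn.
case/allPn => _ /mapP[k _ ->] nroot; exists (del / k.+1%:R) => //.
by rewrite divr_gt0 ?ltr0n //= ler_pdivrMr ?ltr0n // ler_peMr ?ler1n // ltW.
Qed.

Lemma small_scaled_entries (R : numFieldType) m n (X : 'M[R]_(m, n)) (eps : R) :
  0 < eps -> exists2 del, 0 < del &
    forall c i j, `|c| <= del -> `|c * X i j| < eps.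
Proof.
move=> eps0; pose sX := \sum_i \sum_j `|X i j|.
have sX0 : 0 <= sX by apply: sumr_ge0 => i _; apply: sumr_ge0.
have sX1 : 0 < 1 + sX by rewrite ltr_wpDr.
exists (eps / (1 + sX)) => [|c i j cdel]; first by rewrite divr_gt0.
have Xij : `|X i j| <= sX.
  rewrite /sX (bigD1 i) //= (bigD1 j) //= -addrA lerDl addr_ge0 //.
    by apply: sumr_ge0.
  by apply: sumr_ge0 => i' _; apply: sumr_ge0.
rewrite normrM; apply: le_lt_trans (ler_pM _ _ cdel Xij) _ => //.
by rewrite mulrAC ltr_pdivrMr // ltr_pM2l // ltrDr.
Qed.

Theorem proposition14 (C : numClosedFieldType) (n : nat) (M : 'M[C]_n.+1) :
  M^T = M ->
  forall eps : C, 0 < eps ->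
  exists S : tensor3 C n.+1,
    in_OW S /\ forall i j : 'I_n.+1, `|first_slice S i j - M i j| < eps.
Proof.
move=> MT eps eps0.
have [H [HTH H0]] := householder_full_first_column C n.
pose N := H^T *m diag_mx (\row_l (l : nat)%:R) *m H.
have N_generic : genericity N != 0.
  by apply: genericity_orth_diag => // l m /eqP; rewrite eqr_nat => /eqP/val_inj.
have NT : N^T = N by rewrite /N !trmx_mul trmxK tr_diag_mx mulmxA.
have [Q Qline] : exists Q : {poly C}, forall t, Q.[t] = genericity (M + t *: (N - M)).
  by apply: genericity_line; rewrite pnatr_eq0.
have Q0 : Q != 0.
  apply: contra N_generic => /eqP Q0.
  by rewrite -[N](subrK M) addrC -[N - M]scale1r -Qline Q0 horner0.
have [del del0 small] := small_scaled_entries (N - M) eps0.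
have [c /andP[c0 cdel] nroot] := nonroot_near0 Q0 del0.
pose B := M + c *: (N - M).
have BT : B^T = B by rewrite /B linearD linearZ /= linearB /= MT NT.
have B_generic : genericity B != 0 by rewrite -Qline.
have [A [d [ATA A0 DB]]] := generic_sym_orth_diag BT B_generic.
have [S [OW_S slice_S]] := orth_diag_first_slice d ATA A0.
exists S; split=> // i j; rewrite slice_S -DB.
have -> : B i j - M i j = c * (N - M) i j.
  by rewrite [B i j]mxE [(c *: (N - M)) i j]mxE addrAC subrr add0r.
by apply: small; rewrite ger0_norm ?(ltW c0).
Qed.
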